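(* Let $A$ be an effect on a complex separable Hilbert space $\mathcal{H}$, with spectrum $\sigma_A$, and write $A'=I-A$. Then the operator $AA'$ satisfies: (a) $\mathbb{O}\le AA'\le\tfrac14 I$; (b) $\tfrac14-\max\bigl\{(\|A\|-\tfrac12)^2,(\|A'\|-\tfrac12)^2\bigr\}\le\|AA'\|\le\tfrac14$; (c) $\|AA'\|=\tfrac14$ if and only if $\tfrac12\in\sigma_A$; (d) $\|I-AA'\|=\tfrac34+\max\bigl\{(\|A\|-\tfrac12)^2,(\|A'\|-\tfrac12)^2\bigr\}$.
   Context: An effect is a selfadjoint bounded operator $A$ with $\mathbb{O}\le A\le I$. Norms are operator norms. *)

From HB Require Import structures.
From mathcomp Require Import all_boot all_order all_algebra.
From mathcomp Require Import complex.
From mathcomp Require Import boolp classical_sets reals.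
Set Implicit Arguments. Unset Strict Implicit. Unset Printing Implicit Defensive.
Import Order.TTheory GRing.Theory Num.Theory.
Local Open Scope ring_scope.
Local Open Scope classical_set_scope.

Section Hilbert.
Variable R : realType.
Variable H : lmodType R[i].
Variable ip : H -> H -> R[i].   (* inner product, linear in the first argument *)

Definition hnorm (x : H) : R := Num.sqrt (complex.Re (ip x x)).

Record isHilbert : Prop := {
  ip_linl : forall (a : R[i]) (x y z : H), ip (a *: x + y) z = a * ip x z + ip y z;
  ip_conj : forall x y : H, ip y x = conjc (ip x y);
  ip_ge0  : forall x : H, 0 <= ip x x;
  ip_def  : forall x : H, ip x x = 0 -> x = 0;
  ip_complete : forall u : nat -> H,
     (forall e : R, 0 < e -> exists N, forall m n, (N <= m)%N -> (N <= n)%N ->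
        hnorm (u m - u n) < e) ->
     exists l : H, forall e : R, 0 < e -> exists N, forall n, (N <= n)%N ->
        hnorm (u n - l) < e;
  ip_separable : exists d : nat -> H, forall (x : H) (e : R), 0 < e ->
     exists n, hnorm (x - d n) < e
}.

Definition bounded_op (T : H -> H) : Prop :=
  (forall (a : R[i]) (x y : H), T (a *: x + y) = a *: T x + T y) /\
  exists M : R, forall x, hnorm (T x) <= M * hnorm x.

Definition opnorm (T : H -> H) : R := sup [set hnorm (T x) | x in [set x | hnorm x <= 1]].

Definition selfadjoint (T : H -> H) : Prop := forall x y, ip (T x) y = ip x (T y).

(* Loewner order: S <= T iff <Sx,x> <= <Tx,x> for all x (order of R[i]:
   the difference is real and nonnegative) *)
Definition le_op (S T : H -> H) : Prop := forall x, ip (S x) x <= ip (T x) x.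

Definition effect (A : H -> H) : Prop :=
  [/\ bounded_op A, selfadjoint A, le_op (fun _ => 0) A & le_op A id].

Definition spectrum (T : H -> H) : set R[i] :=
  [set l | ~ exists B : H -> H, [/\ bounded_op B,
        cancel (fun x => T x - l *: x) B & cancel B (fun x => T x - l *: x)]].

End Hilbert.

From HB Require Import structures.
From mathcomp Require Import all_boot all_order all_algebra.
From mathcomp Require Import complex.
From mathcomp Require Import boolp classical_sets reals.
From mathcomp Require Import ring lra.
Import Order.TTheory GRing.Theory Num.Theory.
Local Open Scope ring_scope.
Local Open Scope classical_set_scope.

(* Write T = A - 1/2, so that AA' = 1/4 - T^2 and <AA'x, x> = |x|^2/4 - |Tx|^2.
   For a selfadjoint operator the norm is bounded by the numerical radius, and
   the quadratic form of T lies between (1/2 - ||A'||)|x|^2 and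
   (||A|| - 1/2)|x|^2; hence |Tx|^2 <= m |x|^2, which gives (a), (b) and the
   upper bound in (d).  The lower bound in (d) comes from unit vectors x with
   |Ax| close to ||A|| (or to ||A'||), for which
   <(I - AA')x, x> >= 1 - |Ax| + |Ax|^2 = 3/4 + (|Ax| - 1/2)^2.
   For (c): ||AA'|| < 1/4 exactly when T is bounded below; in that case
   T^2 = (I - 4AA')/4 is onto by a Neumann series, so T has a bounded inverse. *)

Local Notation RC r := ((r%:C)%C).

Section ComplexParts.
Context {R : rcfType}.
Local Notation Re := (@complex.Re R).
Local Notation Im := (@complex.Im R).

Lemma ReD (a b : R[i]) : Re (a + b) = Re a + Re b.
Proof. by case: a => ? ?; case: b => ? ?. Qed.
Lemma ReN (a : R[i]) : Re (- a) = - Re a.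
Proof. by case: a. Qed.
Lemma ReMr (r : R) (w : R[i]) : Re (RC r * w) = r * Re w.
Proof. case: w => ? ? /=; ring. Qed.
Lemma ReJ (w : R[i]) : Re (conjc w) = Re w.
Proof. by case: w. Qed.
Lemma ImD (a b : R[i]) : Im (a + b) = Im a + Im b.
Proof. by case: a => ? ?; case: b => ? ?. Qed.
Lemma ImN (a : R[i]) : Im (- a) = - Im a.
Proof. by case: a. Qed.
Lemma ImJ (w : R[i]) : Im (conjc w) = - Im w.
Proof. by case: w. Qed.
Lemma RC_inv_nat n : ((n%:R)^-1 : R[i]) = RC (n%:R^-1).
Proof. by rewrite fmorphV rmorph_nat. Qed.

End ComplexParts.

Section GeometricDecay.
Context {R : archiRealFieldType}.

Lemma geometric_bernoulli (c : R) N : 0 <= c <= 1 -> c ^+ N * (1 + N%:R * (1 - c)) <= 1.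
Proof.
move=> /andP[c0 c1]; elim: N => [|N IH]; first by rewrite expr0 mul0r addr0 mulr1.
have cN0 : 0 <= c ^+ N := exprn_ge0 N c0.
have cN1 : c ^+ N.+1 <= 1 := exprn_ile1 N.+1 c0 c1.
have := ler_wpM2l c0 IH; rewrite exprS -natr1 mulr1.
have := ler0n R N; set n := N%:R; set P := c ^+ N; rewrite exprS -/P in cN1 *.
nra.
Qed.

Lemma geometric_small {c V e : R} : 0 <= c -> c < 1 -> 0 <= V -> 0 < e ->
  exists N, c ^+ N * V < e.
Proof.
move=> c0 c1 V0 ep.
have s0 : 0 < 1 - c by rewrite subr_gt0.
have x0 : 0 <= V / (e * (1 - c)) by rewrite divr_ge0 // ltW // mulr_gt0.
exists (Num.Def.archi_bound (V / (e * (1 - c)))).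
have := archi_boundP x0; set N := Num.Def.archi_bound _.
rewrite ltr_pdivrMr ?mulr_gt0 // => hV.
have := geometric_bernoulli c N (introT andP (conj c0 (ltW c1))).
have := ler0n R N; set n := N%:R in hV *; set P := c ^+ N => n0 hP.
have q0 : 0 < 1 + n * (1 - c) by have := mulr_ge0 n0 (ltW s0); lra.
rewrite -(ltr_pM2r q0); have := ler_wpM2l V0 hP; nra.
Qed.

End GeometricDecay.

(** * Operators on a Hilbert space *)

Section InnerProductSpace.
Context {R : realType} {H : lmodType R[i]} (ip : H -> H -> R[i]).
Hypothesis hH : isHilbert ip.

Local Notation Re := (@complex.Re R).
Local Notation Im := (@complex.Im R).

Lemma ipDl x y z : ip (x + y) z = ip x z + ip y z.
Proof. by have := ip_linl hH 1 x y z; rewrite scale1r mul1r. Qed.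
Lemma ip0l z : ip 0 z = 0.
Proof.
have h := ipDl 0 0 z; rewrite addr0 in h.
by apply: (addrI (ip 0 z)); rewrite addr0 -h.
Qed.
Lemma ipZl a x z : ip (a *: x) z = a * ip x z.
Proof. by have := ip_linl hH a x 0 z; rewrite addr0 ip0l addr0. Qed.
Lemma ipNl x z : ip (- x) z = - ip x z.
Proof. by rewrite -scaleN1r ipZl mulN1r. Qed.

(* All estimates only use the real part of [ip], a real inner product. *)
Definition ipr (x y : H) : R := Re (ip x y).
Definition normsq (x : H) : R := ipr x x.

Lemma iprDl x y z : ipr (x + y) z = ipr x z + ipr y z.
Proof. by rewrite /ipr ipDl ReD. Qed.
Lemma iprNl x z : ipr (- x) z = - ipr x z.
Proof. by rewrite /ipr ipNl ReN. Qed.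
Lemma iprBl x y z : ipr (x - y) z = ipr x z - ipr y z.
Proof. by rewrite iprDl iprNl. Qed.
Lemma ipr0l z : ipr 0 z = 0.
Proof. by rewrite /ipr ip0l. Qed.
Lemma iprZl r x z : ipr (RC r *: x) z = r * ipr x z.
Proof. by rewrite /ipr ipZl ReMr. Qed.
Lemma iprC x y : ipr x y = ipr y x.
Proof. by rewrite /ipr (ip_conj hH x y) ReJ. Qed.
Lemma iprDr x y z : ipr z (x + y) = ipr z x + ipr z y.
Proof. by rewrite iprC iprDl !(iprC z). Qed.
Lemma iprNr x z : ipr z (- x) = - ipr z x.
Proof. by rewrite iprC iprNl iprC. Qed.
Lemma iprBr x y z : ipr z (x - y) = ipr z x - ipr z y.
Proof. by rewrite iprDr iprNr. Qed.
Lemma iprZr r x z : ipr z (RC r *: x) = r * ipr z x.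
Proof. by rewrite iprC iprZl iprC. Qed.

Lemma normsq_ge0 x : 0 <= normsq x.
Proof. by have := ip_ge0 hH x; rewrite lecE => /andP[]. Qed.
Lemma ip_normsq x : ip x x = RC (normsq x).
Proof.
rewrite /normsq /ipr; move: (ger0_Im (ip_ge0 hH x)).
by case: (ip x x) => a b /= ->.
Qed.
Lemma normsq_eq0 x : normsq x = 0 -> x = 0.
Proof. by move=> h; apply: (ip_def hH); rewrite ip_normsq h. Qed.
Lemma normsq0 : normsq 0 = 0.
Proof. exact: ipr0l. Qed.
Lemma normsqD x y : normsq (x + y) = normsq x + 2 * ipr x y + normsq y.
Proof. rewrite /normsq iprDl !iprDr (iprC y x); ring. Qed.
Lemma normsqB x y : normsq (x - y) = normsq x - 2 * ipr x y + normsq y.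
Proof. rewrite /normsq iprBl !iprBr (iprC y x); ring. Qed.
Lemma normsqN x : normsq (- x) = normsq x.
Proof. by rewrite /normsq iprNl iprNr opprK. Qed.
Lemma normsqZ r x : normsq (RC r *: x) = r ^+ 2 * normsq x.
Proof. rewrite /normsq iprZl iprZr; ring. Qed.

Local Notation hnorm := (hnorm ip).

Lemma hnormE x : hnorm x = Num.sqrt (normsq x).
Proof. by []. Qed.
Lemma hnorm_ge0 x : 0 <= hnorm x.
Proof. exact: sqrtr_ge0. Qed.
Lemma hnorm_sqr x : hnorm x ^+ 2 = normsq x.
Proof. by rewrite sqr_sqrtr // normsq_ge0. Qed.
Lemma hnorm0 : hnorm 0 = 0.
Proof. by rewrite hnormE normsq0 sqrtr0. Qed.
Lemma hnormN x : hnorm (- x) = hnorm x.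
Proof. by rewrite !hnormE normsqN. Qed.
Lemma hnorm1 {x : H} : normsq x = 1 -> hnorm x = 1.
Proof. by rewrite hnormE => ->; rewrite sqrtr1. Qed.
Lemma hnorm_gt0 {x : H} : x != 0 -> 0 < hnorm x.
Proof.
move=> xn; rewrite lt_def hnorm_ge0 andbT; apply/eqP => h.
by move/eqP: xn; apply; apply: normsq_eq0; rewrite -hnorm_sqr h expr0n.
Qed.

Lemma normsq_normalize {x : H} : x != 0 -> normsq (RC (hnorm x)^-1 *: x) = 1.
Proof.
by move=> xn; rewrite normsqZ -hnorm_sqr exprVn mulVf ?expf_neq0 ?gt_eqF ?hnorm_gt0.
Qed.

Lemma hnorm_le x c : 0 <= c -> (hnorm x <= c) <-> (normsq x <= c ^+ 2).
Proof.
move=> c0; have := hnorm_ge0 x; rewrite -(hnorm_sqr x).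
by split => h; nra.
Qed.

Lemma hnorm_leM x y c : 0 <= c ->
  (hnorm x <= c * hnorm y) <-> (normsq x <= c ^+ 2 * normsq y).
Proof.
move=> c0; rewrite -(hnorm_sqr x) -(hnorm_sqr y).
have := hnorm_ge0 x; have := hnorm_ge0 y; have := mulr_ge0 c0 (hnorm_ge0 y).
by split => h; nra.
Qed.

Lemma ipr_le_hnormM x y : ipr x y <= hnorm x * hnorm y.
Proof.
set a := hnorm x; set b := hnorm y.
have [->|xn] := eqVneq x 0; first by rewrite ipr0l mulr_ge0 ?hnorm_ge0.
have [->|yn] := eqVneq y 0; first by rewrite iprC ipr0l mulr_ge0 ?hnorm_ge0.
have ap : 0 < a := hnorm_gt0 xn; have bp : 0 < b := hnorm_gt0 yn.
(* expand [0 <= |b x - a y|^2] *)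
have := normsq_ge0 (RC b *: x - RC a *: y).
rewrite normsqB !normsqZ iprZl iprZr -!hnorm_sqr -/a -/b.
have := mulr_gt0 ap bp; nra.
Qed.

Lemma hnormD x y : hnorm (x + y) <= hnorm x + hnorm y.
Proof.
have a0 := hnorm_ge0 x; have b0 := hnorm_ge0 y.
apply/(hnorm_le _ _ (addr_ge0 a0 b0)); rewrite normsqD -!hnorm_sqr.
have := ipr_le_hnormM x y; nra.
Qed.

Lemma hnorm_small_eq0 x : (forall e, 0 < e -> hnorm x <= e) -> x = 0.
Proof.
move=> h; apply: normsq_eq0; rewrite -hnorm_sqr.
suff -> : hnorm x = 0 by rewrite expr0n.
apply/le_anti; rewrite hnorm_ge0 andbT.
by apply/ler_addgt0Pr => e ep; rewrite add0r; apply: h.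
Qed.

Section LinearOperator.
Context {T : H -> H} (lT : linear T).

Lemma linD x y : T (x + y) = T x + T y.
Proof. by have := lT 1 x y; rewrite !scale1r. Qed.
Lemma lin0 : T 0 = 0.
Proof.
have h := linD 0 0; rewrite addr0 in h.
by apply: (addrI (T 0)); rewrite addr0 -h.
Qed.
Lemma linZ a x : T (a *: x) = a *: T x.
Proof. by have := lT a x 0; rewrite !addr0 lin0 addr0. Qed.
Lemma linN x : T (- x) = - T x.
Proof. by rewrite -scaleN1r linZ scaleN1r. Qed.
Lemma linB x y : T (x - y) = T x - T y.
Proof. by rewrite linD linN. Qed.

End LinearOperator.

Lemma lin_id : linear (fun x : H => x).
Proof. by []. Qed.
Lemma lin_scale (r : R[i]) : linear (fun x : H => r *: x).
Proof. by move=> a x y; rewrite scalerDr !scalerA mulrC. Qed.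
Lemma lin_sub {S T : H -> H} : linear S -> linear T -> linear (fun x => S x - T x).
Proof. by move=> lS lT a x y; rewrite lS lT scalerBr opprD addrACA. Qed.
Lemma lin_comp {S T : H -> H} : linear S -> linear T -> linear (fun x => S (T x)).
Proof. by move=> lS lT a x y; rewrite lT lS. Qed.

Definition ipr_sym (T : H -> H) := forall x y, ipr (T x) y = ipr x (T y).
Definition qform (T : H -> H) x := ipr (T x) x.
Definition bounded_by (T : H -> H) c :=
  0 <= c /\ forall x, normsq (T x) <= c ^+ 2 * normsq x.

Section FormBound.
Context {T : H -> H} (lT : linear T) (sT : ipr_sym T) {c : R} (c0 : 0 <= c).
Hypothesis hq : forall x, `|qform T x| <= c * normsq x.

Lemma polarization_le x y : 4 * ipr (T x) y <= c * (2 * normsq x + 2 * normsq y).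
Proof.
have := hq (x + y); have := hq (x - y); rewrite !ler_norml /qform.
rewrite (linB lT) (linD lT) !iprBl !iprDl !iprBr !iprDr normsqB normsqD.
have -> : ipr (T y) x = ipr (T x) y by rewrite sT iprC.
have := mulr_ge0 c0 (normsq_ge0 x); have := mulr_ge0 c0 (normsq_ge0 y).
move=> ? ? /andP[? ?] /andP[? ?]; nra.
Qed.

Lemma form_bounded_by : bounded_by T c.
Proof.
split=> // x; have N0 := normsq_ge0 (T x); have X0 := normsq_ge0 x.
have hs s : 4 * (s * normsq (T x)) <= c * (2 * normsq x + 2 * (s ^+ 2 * normsq (T x))).
  by have := polarization_le x (RC s *: T x); rewrite iprZr normsqZ.
have [c_eq0|cn0] := eqVneq c 0; first by have := hs 1; rewrite c_eq0; nra.
have cp : 0 < c by rewrite lt_def cn0.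
(* test against [y = c^-1 T x] *)
have := hs c^-1; set d := c^-1.
have cd : c * d = 1 by rewrite divff.
have -> : c * (2 * normsq x + 2 * (d ^+ 2 * normsq (T x)))
          = 2 * c * normsq x + 2 * d * normsq (T x).
  by rewrite expr2 mulrDr !mulrA [c * 2]mulrC -[2 * c * d]mulrA cd; ring.
move=> h; have h2 : d * normsq (T x) <= c * normsq x by lra.
by have := ler_wpM2l (ltW cp) h2; rewrite mulrA cd mul1r mulrA -expr2.
Qed.

End FormBound.

Section OperatorNorm.
Context {T : H -> H} (lT : linear T) {c : R} (hc : bounded_by T c).

Local Notation image_ball := [set hnorm (T x) | x in [set x | hnorm x <= 1]].

Lemma image_ball0 : image_ball 0.
Proof. by exists 0; rewrite /= ?hnorm0 ?(lin0 lT) ?hnorm0. Qed.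

Lemma image_ball_ub : ubound image_ball c.
Proof.
case: hc => c0 hb _ [x /= hx <-]; apply/hnorm_le => //.
move/(hnorm_le _ _ ler01): hx; rewrite expr1n => hx.
have := hb x; have := normsq_ge0 x; have := sqr_ge0 c; nra.
Qed.

Lemma has_sup_image_ball : has_sup image_ball.
Proof. by split; [exists 0; exact: image_ball0 | exists c; exact: image_ball_ub]. Qed.

Lemma opnorm_le : opnorm ip T <= c.
Proof. by apply: ge_sup; [exists 0; exact: image_ball0 | exact: image_ball_ub]. Qed.

Lemma opnorm_ge0 : 0 <= opnorm ip T.
Proof. exact: (sup_upper_bound has_sup_image_ball image_ball0). Qed.

Lemma normsq_le_opnorm x : normsq (T x) <= opnorm ip T ^+ 2 * normsq x.
Proof.
have [->|xn] := eqVneq x 0; first by rewrite (lin0 lT) normsq0 mulr0.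
set a := hnorm x; have ap : 0 < a := hnorm_gt0 xn.
have : hnorm (T (RC a^-1 *: x)) <= opnorm ip T.
  apply: (sup_upper_bound has_sup_image_ball); exists (RC a^-1 *: x) => //=.
  rewrite (hnorm_le _ _ ler01) normsqZ -hnorm_sqr -/a exprVn mulVf ?expr1n //.
  by rewrite expf_neq0 ?gt_eqF.
rewrite (hnorm_le _ _ opnorm_ge0) (linZ lT) normsqZ -[normsq x]hnorm_sqr -/a.
by rewrite exprVn ler_pdivrMl ?exprn_gt0 // mulrC.
Qed.

Lemma qform_le_opnorm x : qform T x <= opnorm ip T * normsq x.
Proof.
have h := proj2 (hnorm_leM (T x) x _ opnorm_ge0) (normsq_le_opnorm x).
have := ipr_le_hnormM (T x) x; rewrite /qform -hnorm_sqr.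
have := hnorm_ge0 x; nra.
Qed.

Lemma opnorm_approx e : (exists x : H, x != 0) -> 0 < e ->
  exists x, normsq x = 1 /\ opnorm ip T - e < hnorm (T x).
Proof.
move=> [x0 x0n] ep.
have [_ [y /= hy <-] hlt] := sup_adherent ep has_sup_image_ball.
have [yz|yn] := eqVneq y 0.
  exists (RC (hnorm x0)^-1 *: x0); split; first exact: normsq_normalize.
  by apply: lt_le_trans (hnorm_ge0 _); rewrite yz (lin0 lT) hnorm0 in hlt.
set a := hnorm y; have ap : 0 < a := hnorm_gt0 yn.
exists (RC a^-1 *: y); split; first exact: normsq_normalize.
apply: (lt_le_trans hlt); rewrite !hnormE ler_sqrt ?normsq_ge0 //.
rewrite (linZ lT) normsqZ.
have : 1 <= a^-1 ^+ 2 by rewrite exprn_ege1 // invr_ge1 ?unitfE ?gt_eqF.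
have := normsq_ge0 (T y); nra.
Qed.

End OperatorNorm.

Definition neumann_sum (C : H -> H) v n := iter n (fun w => v + C w) 0.

Section NeumannSeries.
Context {C : H -> H} (lC : linear C) {c : R} (c0 : 0 <= c) (c1 : c < 1).
Hypothesis hC : forall x, hnorm (C x) <= c * hnorm x.
Variable v : H.
Local Notation neumann_sum := (neumann_sum C v).

Lemma neumann_sumS n : neumann_sum n.+1 = v + C (neumann_sum n).
Proof. by []. Qed.

Lemma neumann_step_le n :
  hnorm (neumann_sum n.+1 - neumann_sum n) <= c ^+ n * hnorm v.
Proof.
elim: n => [|n IH]; first by rewrite expr0 mul1r /neumann_sum /= (lin0 lC) !addr0 subr0.
rewrite !neumann_sumS opprD addrACA subrr add0r -(linB lC).
by apply: (le_trans (hC _)); rewrite exprS -mulrA ler_wpM2l.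
Qed.

Lemma neumann_sum_cauchy_le n k : (1 - c) * hnorm (neumann_sum (n + k) - neumann_sum n)
  <= (c ^+ n - c ^+ (n + k)) * hnorm v.
Proof.
elim: k => [|k IH]; first by rewrite !addn0 subrr hnorm0 mulr0 subrr mul0r.
have h := hnormD (neumann_sum (n + k).+1 - neumann_sum (n + k))
                 (neumann_sum (n + k) - neumann_sum n).
rewrite addrA subrK -addnS in h.
have s0 : 0 <= 1 - c by rewrite subr_ge0 ltW.
have := ler_wpM2l s0 h.
have := neumann_step_le (n + k); rewrite addnS exprS.
have := exprn_ge0 (n + k) c0; have := hnorm_ge0 v; nra.
Qed.

Lemma neumann_sum_cauchy N m n : (N <= n)%N -> (N <= m)%N ->
  (1 - c) * hnorm (neumann_sum m - neumann_sum n) <= c ^+ N * hnorm v.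
Proof.
wlog le_nm : m n / (n <= m)%N.
  move=> wl hn hm; have [le_nm|/ltnW le_mn] := leqP n m; first exact: wl le_nm hn hm.
  by rewrite -hnormN opprB; exact: wl le_mn hm hn.
move=> hNn _; have := neumann_sum_cauchy_le n (m - n); rewrite subnKC //.
move/le_trans; apply; apply: ler_wpM2r; first exact: hnorm_ge0.
have := exprn_ge0 m c0; have : c ^+ n <= c ^+ N.
  by rewrite -(subnKC hNn) exprD ler_piMr ?exprn_ge0 ?exprn_ile1 // ltW.
lra.
Qed.

Lemma neumann_solution : exists w, w - C w = v.
Proof.
have s0 : 0 < 1 - c by rewrite subr_gt0.
have [l hl] : exists l : H, forall e : R, 0 < e -> exists N, forall n, (N <= n)%N ->
    hnorm (neumann_sum n - l) < e.
  apply: (ip_complete hH) => e ep.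
  have [N hN] := geometric_small c0 c1 (hnorm_ge0 v) (mulr_gt0 ep s0).
  exists N => m n hm hn; have := neumann_sum_cauchy N m n hn hm.
  have := hnorm_ge0 (neumann_sum m - neumann_sum n); nra.
exists l; apply/subr0_eq/hnorm_small_eq0 => e ep.
have [N hN] := hl (e / 2) (divr_gt0 ep (ltr0Sn R 1)).
have -> : l - C l - v = (l - neumann_sum N.+1) + (C (neumann_sum N) - C l).
  by rewrite neumann_sumS opprD !addrA subrK addrAC.
apply: (le_trans (hnormD _ _)).
have := hN N.+1 (leqnSn N); rewrite -hnormN opprB => h1.
have := hC (neumann_sum N - l); rewrite (linB lC) => h2.
have := hN N (leqnn N); have := hnorm_ge0 (neumann_sum N - l); nra.
Qed.

End NeumannSeries.

Definition bounded_below (T : H -> H) d := 0 < d /\ forall x, d * normsq x <= normsq (T x).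

Lemma bounded_below_of_inverse {T B : H -> H} : bounded_op ip B -> cancel T B ->
  exists d, bounded_below T d.
Proof.
move=> [_ [M hM]] TK; set M' := Num.max M 1.
have M'p : 0 < M' by rewrite lt_max ltr01 orbT.
exists (M' ^+ 2)^-1; split; first by rewrite invr_gt0 exprn_gt0.
move=> x; rewrite mulrC ler_pdivrMr ?exprn_gt0 // mulrC; apply/(hnorm_leM _ _ _ (ltW M'p)).
rewrite -{1}[x]TK; apply: (le_trans (hM _)).
by apply: ler_wpM2r; rewrite ?hnorm_ge0 ?le_max ?lexx.
Qed.

Lemma inverse_of_bounded_below {T : H -> H} {d : R} : linear T -> bounded_below T d ->
  (forall y, exists z, T z = y) ->
  exists B, [/\ bounded_op ip B, cancel T B & cancel B T].
Proof.
move=> lT [dp hd] Tsurj; have [B TB] := choice Tsurj.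
have Tinj : injective T.
  move=> z1 z2 e; apply/subr0_eq/normsq_eq0/le_anti.
  have := hd (z1 - z2); rewrite (linB lT) e subrr normsq0 => h.
  by rewrite normsq_ge0 andbT -(pmulr_rle0 _ dp).
exists B; split=> [|x|]; last exact: TB.
  split=> [a x y|]; first by apply: Tinj; rewrite lT !TB.
  exists (Num.sqrt d^-1) => y; apply/hnorm_leM; rewrite ?sqrtr_ge0 //.
  by rewrite sqr_sqrtr ?invr_ge0 ?(ltW dp) // ler_pdivlMl // -{2}(TB y).
by apply: Tinj; rewrite TB.
Qed.

(** * Effects *)

Definition one_sub (T : H -> H) x := x - T x.
Definition centre (E : H -> H) x := E x - RC 2^-1 *: x.
Definition compl_prod (E : H -> H) x := E (one_sub E x).

Lemma lin_one_sub {T : H -> H} : linear T -> linear (one_sub T).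
Proof. exact: lin_sub lin_id. Qed.
Lemma sym_one_sub {T : H -> H} : ipr_sym T -> ipr_sym (one_sub T).
Proof. by move=> sT x y; rewrite /one_sub iprBl iprBr sT. Qed.
Lemma qform_one_sub T x : qform (one_sub T) x = normsq x - qform T x.
Proof. by rewrite /qform /one_sub iprBl. Qed.

Section Effect.
Context {E : H -> H} (lE : linear E) (sE : ipr_sym E).
Hypothesis hE : forall x, 0 <= qform E x <= normsq x.

Lemma compl_prodE x : compl_prod E x = E x - E (E x).
Proof. exact: linB. Qed.

Lemma lin_centre : linear (centre E).
Proof. exact: lin_sub lE (lin_scale _). Qed.
Lemma lin_compl_prod : linear (compl_prod E).
Proof. exact: lin_comp lE (lin_one_sub lE). Qed.

Lemma sym_centre : ipr_sym (centre E).
Proof. by move=> x y; rewrite /centre iprBl iprBr iprZl iprZr sE iprC. Qed.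
Lemma sym_compl_prod : ipr_sym (compl_prod E).
Proof. by move=> x y; rewrite !compl_prodE iprBl iprBr !sE. Qed.

Lemma effect_bounded_by1 : bounded_by E 1.
Proof.
by apply: form_bounded_by => // x; rewrite mul1r ger0_norm; case/andP: (hE x).
Qed.

Lemma qform_centre x : qform (centre E) x = qform E x - normsq x / 2.
Proof. by rewrite /qform /centre iprBl iprZl mulrC. Qed.
Lemma qform_compl_prod x : qform (compl_prod E) x = qform E x - normsq (E x).
Proof. by rewrite /qform compl_prodE iprBl (sE (E x) x). Qed.

Lemma normsq_centre x :
  normsq (centre E x) = normsq x / 4 - qform (compl_prod E) x.
Proof. rewrite /centre normsqB normsqZ iprZr qform_compl_prod /qform; by field. Qed.

Lemma centre_bounded_by : bounded_by (centre E) 2^-1.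
Proof.
apply: form_bounded_by; [exact: lin_centre | exact: sym_centre | lra |] => x.
by rewrite qform_centre ler_norml; case/andP: (hE x) => ? ?; apply/andP; split; lra.
Qed.

Lemma qform_compl_prod_bounds x : 0 <= qform (compl_prod E) x <= normsq x / 4.
Proof.
have := (proj2 centre_bounded_by) x; rewrite normsq_centre => h.
have := normsq_ge0 (centre E x); rewrite normsq_centre => h0.
by apply/andP; split; lra.
Qed.

Lemma compl_prod_bounded_by : bounded_by (compl_prod E) 4^-1.
Proof.
apply: form_bounded_by; [exact: lin_compl_prod | exact: sym_compl_prod | lra |].
by move=> x; case/andP: (qform_compl_prod_bounds x) => ? ?; rewrite ger0_norm //; lra.
Qed.

Lemma one_sub_compl_prod_bounded_by : bounded_by (one_sub (compl_prod E)) 1.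
Proof.
apply: form_bounded_by => //.
- exact: lin_one_sub lin_compl_prod.
- exact: sym_one_sub sym_compl_prod.
move=> x; rewrite qform_one_sub; have := normsq_ge0 x.
by case/andP: (qform_compl_prod_bounds x) => ? ? ?; rewrite ger0_norm; lra.
Qed.

Lemma one_sub_compl_prod_opnorm_ge : (exists x : H, x != 0) ->
  3 / 4 + (opnorm ip E - 2^-1) ^+ 2 <= opnorm ip (one_sub (compl_prod E)).
Proof.
move=> hx0; apply/ler_addgt0Pr => e ep.
have [x [nx hx]] := opnorm_approx lE effect_bounded_by1 e hx0 ep.
set al := opnorm ip E in hx *; set h := hnorm (E x) in hx.
have al1 : al <= 1 := opnorm_le lE effect_bounded_by1.
have h0 : 0 <= h := hnorm_ge0 _.
have hal : h <= al.
  apply/(hnorm_le _ _ (opnorm_ge0 lE effect_bounded_by1)).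
  by have := normsq_le_opnorm lE effect_bounded_by1 x; rewrite nx mulr1.
have qh : qform E x <= h by have := ipr_le_hnormM (E x) x; rewrite (hnorm1 nx) mulr1.
have := qform_le_opnorm (lin_one_sub lin_compl_prod) one_sub_compl_prod_bounded_by x.
rewrite qform_one_sub qform_compl_prod nx -(hnorm_sqr (E x)) -/h mulr1.
nra.
Qed.

Lemma centre_centre w :
  centre E (centre E w) = RC 4^-1 *: (w - RC 4 *: compl_prod E w).
Proof.
rewrite /centre compl_prodE (linB lE) (linZ lE) !scalerBr !scalerA -!rmorphM /=.
have -> : (4^-1 * 4 : R) = 1 by field.
have -> : (2^-1 * 2^-1 : R) = 4^-1 by field.
have <- : RC 2^-1 *: E w + RC 2^-1 *: E w = RC 1 *: E w.
  by rewrite -scalerDl -rmorphD /=; congr (_%:C%C *: _); field.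
set a := E (E w); set b := _ *: E w; set u := _ *: w.
have -> : RC 1 *: a = a by exact: scale1r.
by rewrite !opprB !opprD !addrA (addrAC a) (addrC a).
Qed.

Lemma compl_prod_one_sub x : compl_prod (one_sub E) x = compl_prod E x.
Proof. by rewrite /compl_prod /one_sub opprB subrKC (linB lE). Qed.

Lemma opnorm_compl_prod_lt {d} : bounded_below (centre E) d ->
  opnorm ip (compl_prod E) < 4^-1.
Proof.
case=> dp hd; set c := Num.max (4^-1 - d) 0.
have c0 : 0 <= c by rewrite le_max lexx orbT.
suff /le_lt_trans : opnorm ip (compl_prod E) <= c.
  by apply; rewrite /c gt_max; apply/andP; split; lra.
apply: (opnorm_le lin_compl_prod).
apply: (form_bounded_by lin_compl_prod sym_compl_prod c0) => x.
have := hd x; rewrite normsq_centre; case/andP: (qform_compl_prod_bounds x) => ? _.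
rewrite ger0_norm // => h; apply: le_trans (_ : (4^-1 - d) * normsq x <= _).
  by rewrite mulrBl; lra.
by apply: ler_wpM2r; rewrite ?normsq_ge0 ?le_max ?lexx.
Qed.

Lemma centre_bounded_below : opnorm ip (compl_prod E) < 4^-1 ->
  bounded_below (centre E) (4^-1 - opnorm ip (compl_prod E)).
Proof.
move=> hk; split; first by rewrite subr_gt0.
move=> z; rewrite normsq_centre mulrBl.
have := qform_le_opnorm lin_compl_prod compl_prod_bounded_by z; lra.
Qed.

Lemma centre_surjective : opnorm ip (compl_prod E) < 4^-1 ->
  forall y, exists z, centre E z = y.
Proof.
move=> hk y; set k := opnorm ip (compl_prod E) in hk.
have k0 : 0 <= k := opnorm_ge0 lin_compl_prod compl_prod_bounded_by.
have lC : linear (fun w => RC 4 *: compl_prod E w) := lin_comp (lin_scale _) lin_compl_prod.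
have hC x : hnorm (RC 4 *: compl_prod E x) <= (4 * k) * hnorm x.
  apply/hnorm_leM; first by rewrite mulr_ge0.
  have := normsq_le_opnorm lin_compl_prod compl_prod_bounded_by x.
  rewrite normsqZ exprMn -/k; lra.
have c1 : 4 * k < 1 by lra.
have [w hw] := neumann_solution lC (mulr_ge0 (ler0n _ 4) k0) c1 hC (RC 4 *: y).
exists (centre E w); rewrite centre_centre hw scalerA -rmorphM /=.
by rewrite mulVf ?pnatr_eq0 // scale1r.
Qed.

Lemma opnorm_compl_prod_eq_quarter :
  opnorm ip (compl_prod E) = 4^-1 <-> 2^-1 \in spectrum ip E.
Proof.
rewrite in_setE /spectrum /= RC_inv_nat -/(centre E).
split=> [hk [B [bB TB _]] | hs].
  have [d hd] := bounded_below_of_inverse bB TB.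
  by have := opnorm_compl_prod_lt hd; rewrite hk ltxx.
apply/le_anti; rewrite (opnorm_le lin_compl_prod compl_prod_bounded_by) /=.
rewrite leNgt; apply/negP => hk; apply: hs.
exact: inverse_of_bounded_below lin_centre (centre_bounded_below hk) (centre_surjective hk).
Qed.

End Effect.

Lemma sym_of_selfadjoint {T : H -> H} : selfadjoint ip T -> ipr_sym T.
Proof. by move=> sT x y; rewrite /ipr sT. Qed.

Lemma Im_selfadjoint {T : H -> H} x : selfadjoint ip T -> Im (ip (T x) x) = 0.
Proof.
move=> sT; have := ip_conj hH (T x) x; rewrite -sT => /(congr1 Im).
rewrite ImJ => h; lra.
Qed.

Lemma effect_qform_bounds {A : H -> H} : effect ip A -> forall x, 0 <= qform A x <= normsq x.
Proof.
case=> _ _ hA0 hA1 x; move: (hA0 x) (hA1 x).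
by rewrite /= ip0l !lecE => /andP[_ ?] /andP[_ ?]; apply/andP.
Qed.

Section EffectNorms.
Context {A : H -> H} (lA : linear A) (sA : selfadjoint ip A).
Hypothesis hA : forall x, 0 <= qform A x <= normsq x.
Hypothesis hx0 : exists x : H, x != 0.

Local Notation A' := (one_sub A).
Local Notation m := (Num.max ((opnorm ip A - 2^-1) ^+ 2) ((opnorm ip A' - 2^-1) ^+ 2)).

Let symA : ipr_sym A := sym_of_selfadjoint sA.
Let lA' : linear A' := lin_one_sub lA.
Let symA' : ipr_sym A' := sym_one_sub symA.
Let hA' x : 0 <= qform A' x <= normsq x.
Proof. by rewrite qform_one_sub; case/andP: (hA x) => ? ?; apply/andP; split; lra. Qed.

Lemma le_op_compl_prod :
  le_op ip (fun _ => 0) (compl_prod A) /\ le_op ip (compl_prod A) (fun x => 4^-1 *: x).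
Proof.
have Im0 x : Im (ip (compl_prod A x) x) = 0.
  rewrite compl_prodE // ipDl ipNl ImD ImN Im_selfadjoint // sA.
  by rewrite (ger0_Im (ip_ge0 hH _)) subrr.
split=> x /=; rewrite lecE ?ip0l ?ipZl ?Im0 /=; have := qform_compl_prod_bounds lA symA hA x.
  by rewrite eqxx => /andP[].
rewrite RC_inv_nat ip_normsq -rmorphM /= eqxx /= /qform /ipr => /andP[_ ?].
lra.
Qed.

Lemma normsq_centre_le x : normsq (centre A x) <= m * normsq x.
Proof.
have m0 : 0 <= m by rewrite le_max sqr_ge0.
rewrite -[m]sqr_sqrtr //; move: x; apply: (proj2 (form_bounded_by _ _ _ _)).
- exact: lin_centre.
- exact: sym_centre.
- exact: sqrtr_ge0.
move=> y; rewrite qform_centre.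
have h1 := qform_le_opnorm lA (effect_bounded_by1 lA symA hA) y.
have h2 := qform_le_opnorm lA' (effect_bounded_by1 lA' symA' hA') y.
rewrite qform_one_sub in h2.
have : `|opnorm ip A - 2^-1| <= Num.sqrt m by rewrite -sqrtr_sqr ler_sqrt // le_max lexx.
have : `|opnorm ip A' - 2^-1| <= Num.sqrt m.
  by rewrite -sqrtr_sqr ler_sqrt // le_max lexx orbT.
rewrite !ler_norml => /andP[_ eb] /andP[_ ea].
have := ler_wpM2r (normsq_ge0 y) ea; have := ler_wpM2r (normsq_ge0 y) eb.
by move=> ? ?; apply/andP; split; lra.
Qed.

Lemma opnorm_compl_prod_bounds :
  4^-1 - m <= opnorm ip (compl_prod A) /\ opnorm ip (compl_prod A) <= 4^-1.
Proof.
split; last exact: (opnorm_le (lin_compl_prod lA) (compl_prod_bounded_by lA symA hA)).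
have [x0 x0n] := hx0; set x := RC (hnorm x0)^-1 *: x0.
have nx : normsq x = 1 := normsq_normalize x0n.
have := qform_le_opnorm (lin_compl_prod lA) (compl_prod_bounded_by lA symA hA) x.
have := normsq_centre_le x; rewrite normsq_centre // nx !mulr1; lra.
Qed.

Lemma opnorm_one_sub_compl_prod :
  opnorm ip (one_sub (compl_prod A)) = 3 / 4 + m.
Proof.
have m0 : 0 <= m by rewrite le_max sqr_ge0.
apply/le_anti/andP; split.
  apply: (opnorm_le (lin_one_sub (lin_compl_prod lA))).
  apply: form_bounded_by; [exact: lin_one_sub (lin_compl_prod lA) |
    exact: sym_one_sub (sym_compl_prod lA symA) | lra |] => x.
  rewrite qform_one_sub; have := normsq_centre_le x; rewrite normsq_centre //.
  have := qform_compl_prod_bounds lA symA hA x; have := normsq_ge0 x.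
  by move=> ? /andP[? ?] ?; rewrite ger0_norm; lra.
have geA := one_sub_compl_prod_opnorm_ge lA symA hA hx0.
have := one_sub_compl_prod_opnorm_ge lA' symA' hA' hx0.
rewrite (funext (compl_prod_one_sub lA)) => geA'.
suff : m <= opnorm ip (one_sub (compl_prod A)) - 3 / 4 by lra.
by rewrite ge_max; apply/andP; split; lra.
Qed.

End EffectNorms.

End InnerProductSpace.


Theorem mainTheorem7 (R : realType) (H : lmodType R[i]) (ip : H -> H -> R[i])
  (hH : isHilbert ip) (hH0 : exists x : H, x != 0)
  (A : H -> H) (hA : effect ip A) :
  let A' := fun x => x - A x in
  let AA' := fun x => A (A' x) in
  let m := Num.max ((opnorm ip A - 2^-1) ^+ 2) ((opnorm ip A' - 2^-1) ^+ 2) in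
  [/\ le_op ip (fun _ => 0) AA' /\ le_op ip AA' (fun x => 4^-1 *: x),
      4^-1 - m <= opnorm ip AA' /\ opnorm ip AA' <= 4^-1,
      opnorm ip AA' = 4^-1 <-> 2^-1 \in spectrum ip A
    & opnorm ip (fun x => x - AA' x) = 3 / 4 + m].
Proof.
move=> A' AA' m.
have hq := effect_qform_bounds ip hH hA.
case: hA => [[lA _] sA _ _].
split.
- exact: (le_op_compl_prod ip hH lA sA hq).
- exact: (opnorm_compl_prod_bounds ip hH lA sA hq hH0).
- exact: (opnorm_compl_prod_eq_quarter ip hH lA (sym_of_selfadjoint ip sA) hq).
- exact: (opnorm_one_sub_compl_prod ip hH lA sA hq hH0).
Qed.
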